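(* Let $\ell,k$ be positive integers with $k\ge 2$, and let $G_{\ell,k}$ be the graph constructed as follows: take disjoint paths $x_{0,r}x_{1,r}\cdots x_{\ell,r}$ for $1\le r\le k$, identify $x_{0,1},\dots,x_{0,k}$ into a single vertex $u$, identify $x_{\ell,1},\dots,x_{\ell,k}$ into a single vertex $v$, and add the edge $uv$. For vertices $a,b\ne u$ write $a\sim_u b$ if there is a graph automorphism $\pi$ of $G_{\ell,k}$ with $\pi(u)=u$ and $\pi(a)=b$. Then the equivalence classes of $\sim_u$ are $\{x_{1,r}\}_{r=1}^k,\{x_{2,r}\}_{r=1}^k,\dots,\{x_{\ell-1,r}\}_{r=1}^k$ and $\{v\}$.
   Context: A graph automorphism is a bijection of the vertex set preserving adjacency and non-adjacency. *)

From mathcomp Require Import all_boot all_fingroup.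
Set Implicit Arguments. Unset Strict Implicit. Unset Printing Implicit Defensive.

(* Vertices of G_{l,k}:
   None               = u   (= x_{0,r} for all r)
   Some None          = v   (= x_{l,r} for all r)
   Some (Some (i,r))  = x_{i+1, r+1}, for i : 'I_(l-1), r : 'I_k
   (internal path vertices x_{1..l-1, 1..k}). *)
Definition gvert (l k : nat) : finType := option (option ('I_l.-1 * 'I_k)).

Definition gu {l k : nat} : gvert l k := None.
Definition gv {l k : nat} : gvert l k := Some None.
Definition gx {l k : nat} (i : 'I_l.-1) (r : 'I_k) : gvert l k := Some (Some (i, r)).

Definition gadj (l k : nat) (a b : gvert l k) : bool :=
  match a, b with
  | None, Some None | Some None, None => true
  | None, Some (Some (i, _)) | Some (Some (i, _)), None =>
      i == 0 :> nat                                         (* u -- x_{1,r} *)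
  | Some None, Some (Some (i, _)) | Some (Some (i, _)), Some None =>
      i.+2 == l                                             (* x_{l-1,r} -- v *)
  | Some (Some (i, r)), Some (Some (j, s)) =>
      (r == s) && ((i.+1 == j :> nat) || (j.+1 == i :> nat))
  | _, _ => false
  end.

Definition is_graph_aut (l k : nat) (p : {perm gvert l k}) : Prop :=
  forall a b, gadj (p a) (p b) = gadj a b.

Definition sim_u (l k : nat) (a b : gvert l k) : Prop :=
  exists p : {perm gvert l k}, is_graph_aut p /\ p gu = gu /\ p a = b.

From mathcomp Require Import all_boot all_fingroup.
From mathcomp Require Import zify.
Set Implicit Arguments. Unset Strict Implicit. Unset Printing Implicit Defensive.

(* An automorphism fixing u permutes the neighbours of u.  Among them v has
   degree k + 1 >= 3, whereas every internal path vertex has degree at most 2,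
   so v is fixed too.  Put u at level 0, x_{j,r} at level j and v at level l.
   An automorphism fixing u and v preserves levels: by induction, a vertex of
   level n + 1 has a neighbour of level n, which stays at level n, so its image
   has level n or n + 2; level n is excluded by applying the induction
   hypothesis to the inverse automorphism.  Conversely, permuting the k paths
   is an automorphism fixing u. *)

Section GraphGlk.
Variables l k : nat.
Local Notation V := (gvert l k).

Definition glevel (a : V) : nat :=
  match a with None => 0 | Some None => l | Some (Some (i, _)) => i.+1 end.

Definition gdeg (a : V) : nat := #|[set b | gadj a b]|.

Lemma graph_aut1 : is_graph_aut (1%g : {perm V}).
Proof. by move=> a b; rewrite !perm1. Qed.

Lemma graph_autV (p : {perm V}) : is_graph_aut p -> is_graph_aut p^-1%g.
Proof. by move=> autp a b; rewrite -autp !permKV. Qed.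

Lemma graph_aut_gdeg (p : {perm V}) a : is_graph_aut p -> gdeg (p a) = gdeg a.
Proof.
move=> autp; rewrite /gdeg -(card_preimset _ (@perm_inj _ p)).
by apply: eq_card => b; rewrite !inE autp.
Qed.

Lemma gadj_glevel a b : gadj a b -> a != gv -> b != gv ->
  (glevel a).+1 = glevel b \/ (glevel b).+1 = glevel a.
Proof.
by case: a => [[[i r]|]|]; case: b => [[[j s]|]|] //= *; lia.
Qed.

Lemma gadj_gx_glevel_inj i r b c : gadj (gx i r) b -> gadj (gx i r) c ->
  glevel b = glevel c -> b = c.
Proof.
have := ltn_ord i.
case: b => [[[j s]|]|]; case: c => [[[j' s']|]|] //=;
  try (have := ltn_ord j; lia); try (have := ltn_ord j'; lia); try lia.
by move=> _ /andP[/eqP <- _] /andP[/eqP <- _] [/val_inj ->].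
Qed.

Lemma gdeg_gx i r : gdeg (gx i r) <= 2.
Proof.
rewrite /gdeg cardE -(size_map glevel).
apply: (@uniq_leq_size _ _ [:: i : nat; i.+2]).
  rewrite map_inj_in_uniq ?enum_uniq // => b c.
  by rewrite !mem_enum !inE; apply: gadj_gx_glevel_inj.
move=> n /mapP[b]; rewrite mem_enum inE => rb ->.
have [bv|bv] := eqVneq b gv.
  by move: rb; rewrite bv !inE /= => /eqP ->; rewrite eqxx orbT.
by rewrite !inE; case: (gadj_glevel rb _ bv) => //= [<-|[->]]; rewrite eqxx ?orbT.
Qed.

Lemma gdeg_gv : 1 < l -> k.+1 <= gdeg gv.
Proof.
move=> l_gt1; have lt_last : l.-2 < l.-1 by lia.
set N := [set gx (Ordinal lt_last) r | r : 'I_k].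
have card_N : #|N| = k by rewrite card_imset ?card_ord // => r s [].
have gu_N : gu \notin N by apply/imsetP => -[].
have := cardsU1 gu N; rewrite gu_N card_N add1n => <-.
apply/subset_leq_card/subsetP => b; rewrite !inE => /predU1P[-> //|/imsetP[r _ ->]].
by rewrite /=; apply/eqP; lia.
Qed.

Lemma graph_aut_fix_gv (p : {perm V}) :
  1 < k -> is_graph_aut p -> p gu = gu -> p gv = gv.
Proof.
move=> k_gt1 autp pu; have : gadj gu (p gv) by rewrite -pu autp.
case pvE: (p gv) => [[[i s]|]|] //= _.
have := gdeg_gx i s; rewrite /gx -pvE graph_aut_gdeg //.
by have := gdeg_gv; have := ltn_ord i; lia.
Qed.

Lemma gadj_lower a : a != gu -> a != gv ->
  exists b, [/\ gadj a b, b != gv & (glevel b).+1 = glevel a].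
Proof.
case: a => [[[[[|i] lti] r]|]|] // _ _; first by exists gu.
have lti' : i < l.-1 by lia.
by exists (gx (Ordinal lti') r); rewrite /= !eqxx orbT.
Qed.

Lemma graph_aut_glevel (p : {perm V}) a :
  is_graph_aut p -> p gu = gu -> p gv = gv -> glevel (p a) = glevel a.
Proof.
have [n] := ubnP (glevel a); elim: n => // n IH in p a *; rewrite ltnS => le_an.
move=> autp pu pv.
have [->|a_u] := eqVneq a gu; first by rewrite pu.
have [->|a_v] := eqVneq a gv; first by rewrite pv.
have [b [ab b_v lt_ba]] := gadj_lower a_u a_v.
have pbE : glevel (p b) = glevel b by apply: IH => //; rewrite lt_ba.
have ne_v c : c != gv -> p c != gv by move=> c_v; rewrite -pv (inj_eq perm_inj).
have [back|] := gadj_glevel (etrans (autp a b) ab) (ne_v a a_v) (ne_v b b_v); last first.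
  by move=> <-; rewrite pbE lt_ba.
have pV_u : p^-1%g gu = gu by rewrite -{1}pu permK.
have pV_v : p^-1%g gv = gv by rewrite -{1}pv permK.
have lt_pa : glevel (p a) < n by lia.
have := IH p^-1%g (p a) lt_pa (graph_autV autp) pV_u pV_v; rewrite permK; lia.
Qed.

Lemma graph_aut_gx (p : {perm V}) i r :
  is_graph_aut p -> p gu = gu -> p gv = gv -> exists s, p (gx i r) = gx i s.
Proof.
move=> autp pu pv; have := graph_aut_glevel (gx i r) autp pu pv.
case: (p (gx i r)) => [[[j s]|]|] //=; last by have := ltn_ord i; lia.
by move=> [/val_inj ->]; exists s.
Qed.

Definition permute_paths (s : {perm 'I_k}) (a : V) : V :=
  if a is Some (Some (i, r)) then gx i (s r) else a.

Lemma permute_paths_inj s : injective (permute_paths s).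
Proof. by case=> [[[i r]|]|]; case=> [[[j t]|]|] //= [-> /perm_inj ->]. Qed.

Lemma graph_aut_permute_paths s : is_graph_aut (perm (@permute_paths_inj s)).
Proof.
move=> a b; rewrite !permE.
by case: a => [[[i r]|]|]; case: b => [[[j t]|]|] //=; rewrite (inj_eq perm_inj).
Qed.

End GraphGlk.

Theorem proposition16 (l k : nat) (hl : 0 < l) (hk : 2 <= k) :
  forall a b : gvert l k, a <> gu -> b <> gu ->
    (sim_u a b <->
      ((a = gv /\ b = gv) \/
       (exists (i : 'I_l.-1) (r s : 'I_k), a = gx i r /\ b = gx i s))).
Proof.
move=> a b a_u _; split.
  case=> p [autp [pu <-]]; have pv := graph_aut_fix_gv hk autp pu.
  case: a a_u => [[[i r]|]|] // _; last by left.
  by have [s ->] := graph_aut_gx i r autp pu pv; right; exists i, r, s.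
case=> [[-> ->]|[i [r [s [-> ->]]]]].
  by exists 1%g; rewrite !perm1; split; first exact: graph_aut1.
exists (perm (@permute_paths_inj l k (tperm r s))).
by rewrite !permE /= tpermL; split => //; apply: graph_aut_permute_paths.
Qed.
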